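(* Let each $f_\xi:\mathbb{R}^d\to\mathbb{R}$, $\xi\sim\mathcal{D}$, be differentiable and $\mu$-strongly convex with $\mu>0$, let $f=\mathbb{E}_{\xi\sim\mathcal{D}}[f_\xi]$ with minimizer $x_\star$, and define $\sigma_\star^2:=\mathbb{E}_{\xi\sim\mathcal{D}}\|\nabla f_\xi(x_\star)\|^2$. Let $x_0\in\mathbb{R}^d$ be arbitrary and consider SPPM: $x_{k+1}=\operatorname{prox}_{\gamma f_{\xi_k}}(x_k)$, with $\xi_k\sim\mathcal{D}$ sampled independently at each step. Then for any $\gamma>0$ and any $k\ge0$, $$\mathbb{E}\|x_k-x_\star\|^2\le\left(\frac{1}{1+\gamma\mu}\right)^{2k}\|x_0-x_\star\|^2+\frac{\gamma\sigma_\star^2}{\gamma\mu^2+2\mu}.$$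
   Context: $\operatorname{prox}_{\gamma\phi}(y):=\arg\min_{x\in\mathbb{R}^d}\{\phi(x)+\frac{1}{2\gamma}\|x-y\|^2\}$. $\mu$-strong convexity of $g$: $g(y)+\langle\nabla g(y),x-y\rangle+\frac{\mu}{2}\|x-y\|^2\le g(x)$ for all $x,y$. Differentiation and expectation are assumed interchangeable, so $\nabla f=\mathbb{E}[\nabla f_\xi]$. *)

From HB Require Import structures.
From mathcomp Require Import all_boot all_order all_algebra.
From mathcomp Require Import all_classical all_reals all_analysis.
Set Implicit Arguments. Unset Strict Implicit. Unset Printing Implicit Defensive.
Import Order.TTheory GRing.Theory Num.Theory.
Import numFieldNormedType.Exports.
Local Open Scope classical_set_scope.
Local Open Scope ring_scope.

Section Defs.
Variables (R : realType) (n : nat).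

Definition dotp (u v : 'rV[R]_n) : R := \sum_(i < n) u 0 i * v 0 i.
Definition sqnorm (u : 'rV[R]_n) : R := dotp u u.

Definition gradient (f : 'rV[R]_n -> R) (x : 'rV[R]_n) : 'rV[R]_n :=
  \row_i ('d f x (delta_mx 0 i)).

Definition strongly_convex (mu : R) (g : 'rV[R]_n -> R) : Prop :=
  forall x y, g y + dotp (gradient g y) (x - y) + mu / 2 * sqnorm (x - y) <= g x.

Definition is_prox (gamma : R) (phi : 'rV[R]_n -> R) (y x : 'rV[R]_n) : Prop :=
  forall z, phi x + sqnorm (x - y) / (2 * gamma) <= phi z + sqnorm (z - y) / (2 * gamma).

(* prox_{gamma phi}(y) := argmin (chosen by choice; unique when it exists
   for strongly convex phi) *)
Definition prox (gamma : R) (phi : 'rV[R]_n -> R) (y : 'rV[R]_n) : 'rV[R]_n :=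
  xget 0 (is_prox gamma phi y).

Variables (d : measure_display) (Xi : measurableType d) (P : probability Xi R).

Definition expect_fun (F : Xi -> 'rV[R]_n -> R) (x : 'rV[R]_n) : R :=
  fine (\int[P]_xi (F xi x)%:E).

Definition sigma_star2 (F : Xi -> 'rV[R]_n -> R) (xstar : 'rV[R]_n) : \bar R :=
  \int[P]_xi (sqnorm (gradient (F xi) xstar))%:E.

(* sppm_expect F gamma g k x = E[ g(x_k) ] where x_0 = x and
   x_{j+1} = prox_{gamma f_{xi_j}}(x_j) with xi_0, xi_1, ... i.i.d. ~ P:
   the expectation over the independent samples as an iterated integral
   (outermost integral over xi_0). *)
Fixpoint sppm_expect (F : Xi -> 'rV[R]_n -> R) (gamma : R)
    (g : 'rV[R]_n -> \bar R) (k : nat) (x : 'rV[R]_n) : \bar R :=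
  match k with
  | 0 => g x
  | k'.+1 => \int[P]_xi sppm_expect F gamma g k' (prox gamma (F xi) x)
  end.

End Defs.

(* The proximal step of a mu-strongly convex f_xi contracts towards x_\star up to a gradient shift:
   (1 + gamma mu)^2 |prox(y) - x_\star|^2 <= |y - x_\star - gamma grad f_xi(x_\star)|^2,
   because prox(y) minimizes a (mu + 1/gamma)-strongly convex objective.  Taking expectations,
   the cross term vanishes since E grad f_xi(x_\star) = grad f(x_\star) = 0, so
   e_{k+1} <= rho (e_k + gamma^2 sigma_\star^2) with rho = (1 + gamma mu)^-2; unrolling this
   recursion gives the bound, gamma sigma_\star^2 / (gamma mu^2 + 2 mu) being its fixed point. *)

From HB Require Import structures.
From mathcomp Require Import all_boot all_order all_algebra.
From mathcomp Require Import all_classical all_reals all_analysis.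
From mathcomp Require Import ring lra.
Import Order.TTheory GRing.Theory Num.Theory.
Import numFieldNormedType.Exports.
Local Open Scope classical_set_scope.
Local Open Scope ring_scope.

Set Implicit Arguments. Unset Strict Implicit.

Section InnerProduct.
Variables (R : realType) (n : nat).
Implicit Types (u v w : 'rV[R]_n) (a : R).

Lemma dotpC u v : dotp u v = dotp v u.
Proof. by apply: eq_bigr => i _; rewrite mulrC. Qed.

Lemma dotpDl u v w : dotp (u + v) w = dotp u w + dotp v w.
Proof. by rewrite /dotp -big_split; apply: eq_bigr => i _; rewrite mxE mulrDl. Qed.

Lemma dotpZl a u v : dotp (a *: u) v = a * dotp u v.
Proof. by rewrite /dotp mulr_sumr; apply: eq_bigr => i _; rewrite mxE mulrA. Qed.

Lemma dotpNl u v : dotp (- u) v = - dotp u v.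
Proof. by rewrite -scaleN1r dotpZl mulN1r. Qed.

Lemma dotpBl u v w : dotp (u - v) w = dotp u w - dotp v w.
Proof. by rewrite dotpDl dotpNl. Qed.

Lemma dotpDr u v w : dotp w (u + v) = dotp w u + dotp w v.
Proof. by rewrite dotpC dotpDl !(dotpC w). Qed.

Lemma dotpZr a u v : dotp v (a *: u) = a * dotp v u.
Proof. by rewrite dotpC dotpZl dotpC. Qed.

Lemma dotpBr u v w : dotp w (u - v) = dotp w u - dotp w v.
Proof. by rewrite dotpC dotpBl !(dotpC w). Qed.

Lemma sqnorm_ge0 u : 0 <= sqnorm u.
Proof. by apply: sumr_ge0 => i _; rewrite -expr2 sqr_ge0. Qed.

Lemma sqnorm0 : sqnorm (0 : 'rV[R]_n) = 0.
Proof. by rewrite /sqnorm /dotp big1 // => i _; rewrite mxE mulr0. Qed.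

Lemma sqnormD u v : sqnorm (u + v) = sqnorm u + 2 * dotp u v + sqnorm v.
Proof. rewrite /sqnorm !dotpDl !dotpDr (dotpC v u); lra. Qed.

Lemma sqnormB u v : sqnorm (u - v) = sqnorm u - 2 * dotp u v + sqnorm v.
Proof. rewrite /sqnorm !dotpBl !dotpBr (dotpC v u); lra. Qed.

Lemma sqnormZ a u : sqnorm (a *: u) = a ^+ 2 * sqnorm u.
Proof. by rewrite /sqnorm dotpZl dotpZr mulrA -expr2. Qed.

Lemma sqr_coord_le_sqnorm u (i : 'I_n) : u 0 i ^+ 2 <= sqnorm u.
Proof.
rewrite /sqnorm /dotp (bigD1 i) //= -expr2 lerDl.
by apply: sumr_ge0 => j _; rewrite -expr2 sqr_ge0.
Qed.

Lemma sqnorm_le_of_dotp (m : R) u v :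
  0 <= m -> m * sqnorm u <= dotp u v -> m ^+ 2 * sqnorm u <= sqnorm v.
Proof.
move=> m0 muv; have := sqnorm_ge0 (m *: u - v).
rewrite sqnormB sqnormZ dotpZl => h.
have := ler_wpM2l m0 muv; rewrite expr2; nra.
Qed.

Lemma continuous_sqnorm : continuous (@sqnorm R n).
Proof.
move=> u; rewrite /sqnorm /dotp.
elim: (index_enum _) => [|i s IH].
  by under eq_fun do rewrite big_nil; exact: cst_continuous.
under eq_fun do rewrite big_cons.
have ci j : {for u, continuous (fun v : 'rV[R]_n => v 0 j)}.
  exact: coord_continuous.
exact: (cvgD (cvgM (ci i) (ci i)) IH).
Qed.

End InnerProduct.

Lemma ler_of_scaled_by_one_minus (R : realFieldType) (a b : R) :
  (forall t, 0 < t < 1 -> (1 - t) * b <= a) -> b <= a.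
Proof.
move=> H; rewrite leNgt; apply/negP => ab.
have [b0|b0] := lerP b 0.
  have := H (2^-1) ltac:(lra); nra.
(* at [t := (b - a) / (2 b - a)] one has [(1 - t) b = b^2 / (2 b - a) > a] *)
pose t := (b - a) / (2 * b - a).
have den : 0 < 2 * b - a by lra.
have t0 : 0 < t by rewrite /t divr_gt0 //; lra.
have t1 : t < 1 by rewrite /t ltr_pdivrMr //; lra.
have := H t ltac:(lra).
have -> : 1 - t = b / (2 * b - a) by rewrite /t; field; lra.
by rewrite mulrAC ler_pdivrMr //; nra.
Qed.

Section Prox.
Variables (R : realType) (n : nat) (f : 'rV[R]_n -> R) (mu gamma : R).
Hypothesis mu_gt0 : 0 < mu.
Hypothesis gamma_gt0 : 0 < gamma.
Hypothesis f_sc : strongly_convex mu f.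
Implicit Types x y z : 'rV[R]_n.

Definition prox_obj y z := f z + sqnorm (z - y) / (2 * gamma).

Lemma prox_quadratic_growth y x : is_prox gamma f y x ->
  forall z, prox_obj y x + (mu + gamma^-1) / 2 * sqnorm (z - x) <= prox_obj y z.
Proof.
move=> px z; rewrite -lerBrDl; apply: ler_of_scaled_by_one_minus => t /andP[t0 t1].
pose e := z - x; pose w := x + t *: e.
have min_w := px w; rewrite /prox_obj in min_w *.
have sc_z := f_sc z w; have sc_x := f_sc x w.
have ez : z - w = (1 - t) *: e by apply/rowP => i; rewrite !mxE; ring.
have ex : x - w = (- t) *: e by apply/rowP => i; rewrite !mxE; ring.
have ew : w - y = (x - y) + t *: e by apply/rowP => i; rewrite !mxE; ring.
have -> : z - y = (x - y) + e by apply/rowP => i; rewrite !mxE; ring.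
rewrite ez in sc_z; rewrite ex in sc_x; rewrite ew in min_w.
rewrite !sqnormZ !dotpZr in sc_z sc_x.
rewrite !(sqnormD (x - y)) !dotpZr sqnormZ in min_w *.
set G := dotp _ e in sc_z sc_x; set E := sqnorm e in sc_z sc_x min_w *.
set A := sqnorm (x - y) in min_w *; set B := dotp (x - y) e in min_w *.
have -> : (mu + gamma^-1) / 2 = mu / 2 + (2 * gamma)^-1.
  by field; rewrite gt_eqF.
set c := (2 * gamma)^-1 in min_w *.
(* [t * sc_z + (1 - t) * sc_x] bounds [f w], minimality of [x] compares it to [f x] *)
have t1' : 0 <= 1 - t by rewrite subr_ge0 ltW.
have := ler_wpM2l (ltW t0) sc_z; have := ler_wpM2l t1' sc_x.
rewrite -(ler_pM2l t0); nra.
Qed.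

Lemma prox_dotp_ge x xs y : is_prox gamma f y x ->
  (1 + gamma * mu) * sqnorm (x - xs) <= dotp (x - xs) (y - xs - gamma *: gradient f xs).
Proof.
move=> px; have grow := prox_quadratic_growth px xs; have sc := f_sc x xs.
rewrite /prox_obj in grow.
set g := gradient f xs in sc *; set u := x - xs in sc *; set w := y - xs.
have exy : x - y = u - w by apply/rowP => i; rewrite !mxE; ring.
have exsx : xs - x = (-1) *: u by apply/rowP => i; rewrite !mxE; ring.
have exsy : xs - y = (-1) *: w by apply/rowP => i; rewrite !mxE; ring.
rewrite exy exsx exsy !sqnormZ sqnormB in grow.
rewrite dotpC in sc; rewrite dotpBr dotpZr.
set U := sqnorm u in sc grow *; set B := dotp u w in grow *; set C := dotp u g in sc *.
have ec : (mu + gamma^-1) / 2 = mu / 2 + (2 * gamma)^-1 by field; rewrite gt_eqF.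
rewrite ec in grow.
have e2 : gamma * (2 * gamma)^-1 = 2^-1 by field; rewrite gt_eqF.
set c := (2 * gamma)^-1 in grow e2 *.
rewrite expr2 mulN1r opprK !mul1r in grow.
have key : (2 * c + mu) * U + C <= 2 * c * B by have := lerD grow sc; clear; nra.
have := ler_wpM2l (ltW gamma_gt0) key.
have -> : gamma * ((2 * c + mu) * U + C) = 2 * (gamma * c) * U + gamma * (mu * U + C) by ring.
have -> : gamma * (2 * c * B) = 2 * (gamma * c) * B by ring.
by rewrite e2 mulfV ?pnatr_eq0 //; clear; lra.
Qed.

Lemma prox_contraction x xs y : is_prox gamma f y x ->
  (1 + gamma * mu) ^+ 2 * sqnorm (x - xs)
  <= sqnorm (y - xs - gamma *: gradient f xs).
Proof.
move=> px; apply: sqnorm_le_of_dotp (prox_dotp_ge xs px).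
by rewrite addr_ge0 // mulr_ge0 // ltW.
Qed.

Lemma prox_sublevel_bounded y z : prox_obj y z <= prox_obj y y ->
  sqnorm (z - y) <= 4 * sqnorm (gradient f y) / mu ^+ 2.
Proof.
rewrite /prox_obj subrr sqnorm0 mul0r addr0 => hz.
have sc := f_sc z y; rewrite dotpC in sc.
have c0 : 0 <= sqnorm (z - y) / (2 * gamma).
  by rewrite divr_ge0 ?sqnorm_ge0 // mulr_ge0 // ltW.
(* [mu/2 |z - y|^2 <= -<z - y, g>], then Cauchy-Schwarz in the form |mu/2 (z - y) + g|^2 >= 0 *)
have am := sqnorm_ge0 ((mu / 2) *: (z - y) + gradient f y).
rewrite sqnormD sqnormZ dotpZl in am.
set S := sqnorm (z - y) in hz sc am c0 *; set G := sqnorm (gradient f y) in am *.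
set D := dotp (z - y) (gradient f y) in sc am *.
have S0 : 0 <= S := sqnorm_ge0 _.
have h : mu / 2 * S <= - D by lra.
rewrite ler_pdivlMr ?exprn_gt0 //.
have := ler_wpM2l (ltW mu_gt0) h; move: am; rewrite !expr2; clear -S0; nra.
Qed.

Hypothesis f_diff : forall x, differentiable f x.

Lemma continuous_prox_obj y : continuous (prox_obj y).
Proof.
move=> z; have fz : {for z, continuous f} := differentiable_continuous (f_diff z).
have nz : {for z, continuous (fun v : 'rV[R]_n => sqnorm (v - y))}.
  have sub_y : {for z, continuous (fun v : 'rV[R]_n => v - y)}.
    exact: cvgB cvg_id (cvg_cst y).
  exact: continuous_comp sub_y (@continuous_sqnorm R n (z - y)).
exact: cvgD fz (cvgM nz (cvg_cst _)).
Qed.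

Lemma prox_exists y : exists x, is_prox gamma f y x.
Proof.
pose A := [set z | prox_obj y z <= prox_obj y y].
pose r := 1 + 4 * sqnorm (gradient f y) / mu ^+ 2.
have A_box : A `<=` [set v | forall i, `[y 0 i - r, y 0 i + r]%classic (v 0 i)].
  move=> z /prox_sublevel_bounded zr i /=; rewrite in_itv /=.
  have := le_trans (sqr_coord_le_sqnorm (z - y) i) zr; rewrite !mxE /r.
  have : 0 <= 4 * sqnorm (gradient f y) / mu ^+ 2.
    by rewrite divr_ge0 ?sqr_ge0 // mulr_ge0 // sqnorm_ge0.
  set K := 4 * _ / _ => K0 hi; apply/andP; split; nra.
have A_compact : compact A.
  apply: (subclosed_compact _ _ A_box).
    have := preimage_closed (f := prox_obj y) (D := [set t | t <= prox_obj y y]).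
    by apply; [move=> z _; exact: continuous_prox_obj | exact: closed_le].
  have := @rV_compact R n (fun i => `[y 0 i - r, y 0 i + r]%classic).
  by apply => i; exact: segment_compact.
have [x Ax xmin] := EVT_min_rV (ex_intro _ y (lexx _) : A !=set0) A_compact
  (continuous_subspaceT (@continuous_prox_obj y)).
exists x => z; have [zA|zA] := boolP (prox_obj y z <= prox_obj y y).
  by apply: xmin; rewrite inE.
rewrite -ltNge in zA; move: Ax; rewrite inE => Ax.
exact: ltW (le_lt_trans Ax zA).
Qed.

Lemma prox_is_prox y : is_prox gamma f y (prox gamma f y).
Proof. exact: (xgetPex 0 (prox_exists y)). Qed.

End Prox.

Lemma differential_eq0_at_min (R : realType) n (E : 'rV[R]_n -> R) xs v :
  (forall x, differentiable E x) -> (forall x, E xs <= E x) -> 'd E xs v = 0.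
Proof.
move=> dE xs_min.
pose phi (t : R) := E (t *: v + xs).
have phi_quot t : (fun h : R => h^-1 *: (phi (h *: 1 + t) - phi t)) =
    (fun h : R => h^-1 *: (E (h *: v + (t *: v + xs)) - E (t *: v + xs))).
  apply/funext => h; rewrite /phi; congr (_ *: (E _ - _)).
  by rewrite scaler1 scalerDl addrA.
have phi_der t : derivable phi t 1.
  have := @diff_derivable _ _ _ E (t *: v + xs) v (dE (t *: v + xs)).
  by rewrite /derivable phi_quot.
have in01 : (0 : R) \in `](-1), 1[%R by rewrite in_itv /=; apply/andP; split; lra.
have phi_min t : t \in `](-1), 1[%R -> phi 0 <= phi t.
  by move=> _; rewrite /phi scale0r add0r; exact: xs_min.
have := @derive1_at_min R phi (-1) 1 0 ltac:(lra) (fun t _ => phi_der t) in01 phi_min.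
move=> phi'0; have := @derive_val _ _ _ _ _ _ _ phi'0.
by rewrite /derive phi_quot scale0r add0r -/(derive E xs v) deriveE.
Qed.

Section Expectation.
Variables (R : realType) (n : nat) (d : measure_display) (Xi : measurableType d)
  (P : probability Xi R).

(* Unlike [ge0_le_integral], no measurability is required: the SPPM iterates need
   not be measurable in the samples. *)
Lemma le_integral_ge0 (h1 h2 : Xi -> \bar R) :
  (forall xi, (0 <= h1 xi)%E) -> (forall xi, (h1 xi <= h2 xi)%E) ->
  (\int[P]_xi h1 xi <= \int[P]_xi h2 xi)%E.
Proof.
move=> h10 h12.
rewrite !ge0_integralTE //; last by move=> xi; exact: le_trans (h10 xi) (h12 xi).
apply: ereal_sup_le => _ [s sh1 <-]; exists s => //= xi.
exact: le_trans (sh1 xi) (h12 xi).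
Qed.

Variables (g : Xi -> 'rV[R]_n) (s : R).
Hypothesis g_int : forall i, P.-integrable setT (fun xi => (g xi 0 i)%:E).
Hypothesis g_centered : forall i, (\int[P]_xi (g xi 0 i)%:E = 0)%E.
Hypothesis g_var : (\int[P]_xi (sqnorm (g xi))%:E = s%:E)%E.

Lemma integrable_sqnorm : P.-integrable setT (fun xi => (sqnorm (g xi))%:E).
Proof.
apply/integrableP; split.
  apply/measurable_realfun.measurable_EFinP; apply: measurable_sum => i.
  by apply: measurable_realfun.measurable_funM; apply/measurable_realfun.measurable_EFinP; exact: measurable_int (g_int i).
under eq_integral do rewrite gee0_abs ?lee_fin ?sqnorm_ge0 //.
by rewrite g_var ltry.
Qed.

Lemma integrable_dotp v : P.-integrable setT (fun xi => (dotp v (g xi))%:E).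
Proof.
under eq_fun do rewrite /dotp -sumEFin.
apply: integrable_sum => // i _; under eq_fun do rewrite EFinM.
exact: integrableZl.
Qed.

Lemma integral_dotp v : (\int[P]_xi (dotp v (g xi))%:E = 0)%E.
Proof.
under eq_integral do rewrite /dotp -sumEFin.
rewrite integral_sum //; last first.
  by move=> i; under eq_fun do rewrite EFinM; exact: integrableZl.
rewrite big1 // => i _; under eq_integral do rewrite EFinM.
by rewrite integralZl // g_centered mule0.
Qed.

Lemma integral_quadratic v (a b c : R) :
  (\int[P]_xi (a + b * dotp v (g xi) + c * sqnorm (g xi))%:E = (a + c * s)%:E)%E.
Proof.
have cst_int := finite_measure_integrable_cst P a measurableT.
have lin_int : P.-integrable setT (fun xi => (b * dotp v (g xi))%:E).
  by under eq_fun do rewrite EFinM; exact: integrableZl (integrable_dotp v).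
have sq_int : P.-integrable setT (fun xi => (c * sqnorm (g xi))%:E).
  by under eq_fun do rewrite EFinM; exact: integrableZl integrable_sqnorm.
under eq_integral do rewrite !EFinD.
rewrite integralD //; last exact: integrableD.
have P1 : (P : {measure set Xi -> \bar R}) setT = 1%E := probability_setT P.
rewrite integralD // integral_cst // P1 mule1.
under eq_integral do rewrite EFinM.
rewrite integralZl // ?integral_dotp ?mule0 ?adde0; last exact: integrable_dotp.
under eq_integral do rewrite EFinM.
by rewrite integralZl // ?g_var; last exact: integrable_sqnorm.
Qed.

End Expectation.

Lemma sppm_expect_ge0 (R : realType) n d (Xi : measurableType d) (P : probability Xi R)
    (F : Xi -> 'rV[R]_n -> R) gamma (phi : 'rV[R]_n -> \bar R) k x :
  (forall x, (0 <= phi x)%E) -> (0 <= sppm_expect P F gamma phi k x)%E.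
Proof.
move=> phi0; elim: k x => [|k IH] x //=.
by apply: integral_ge0 => xi _; exact: IH.
Qed.

Section SPPM.
Variables (R : realType) (n : nat) (d : measure_display) (Xi : measurableType d)
  (P : probability Xi R) (F : Xi -> 'rV[R]_n -> R) (mu gamma s : R) (xs : 'rV[R]_n).
Hypothesis mu_gt0 : 0 < mu.
Hypothesis gamma_gt0 : 0 < gamma.
Hypothesis F_sc : forall xi, strongly_convex mu (F xi).
Hypothesis F_diff : forall xi x, differentiable (F xi) x.

Let g xi := gradient (F xi) xs.
Hypothesis g_int : forall i, P.-integrable setT (fun xi => (g xi 0 i)%:E).
Hypothesis g_centered : forall i, (\int[P]_xi (g xi 0 i)%:E = 0)%E.
Hypothesis g_var : (\int[P]_xi (sqnorm (g xi))%:E = s%:E)%E.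

Let rho := (1 + gamma * mu)^-2.
Let b := gamma / (gamma * mu ^+ 2 + 2 * mu).

Lemma rho_ge0 : 0 <= rho.
Proof. by rewrite invr_ge0 exprn_ge0 // addr_ge0 // mulr_ge0 // ltW. Qed.

Lemma rho_le1 : rho <= 1.
Proof.
rewrite invf_le1 ?exprn_gt0 ?exprn_ege1 //; first by rewrite lerDl mulr_ge0 // ltW.
by rewrite ltr_wpDr // mulr_ge0 // ltW.
Qed.

(* [b] is the fixed point of [v |-> rho (v + gamma^2)] *)
Lemma variance_bound_fixpoint : b * (1 - rho) = gamma ^+ 2 * rho.
Proof.
have gm0 : 0 < gamma * mu by rewrite mulr_gt0.
rewrite /b /rho; field; rewrite !gt_eqF //; first by rewrite addr_gt0 // mulr_gt0 ?exprn_gt0.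
by rewrite ltr_wpDr // ltW.
Qed.

Lemma sqnorm_prox_sub_le xi x :
  sqnorm (prox gamma (F xi) x - xs)
  <= rho * (sqnorm (x - xs) - 2 * gamma * dotp (x - xs) (g xi) + gamma ^+ 2 * sqnorm (g xi)).
Proof.
have := prox_contraction mu_gt0 gamma_gt0 (F_sc xi) xs
  (prox_is_prox mu_gt0 gamma_gt0 (F_sc xi) (F_diff xi) x).
rewrite (sqnormB (x - xs)) dotpZr sqnormZ mulrA -/(g xi).
have m0 : 0 < (1 + gamma * mu) ^+ 2 by rewrite exprn_gt0 // addr_gt0 // mulr_gt0.
by rewrite -ler_pdivlMl // /rho -exprVn; rewrite mulrC.
Qed.

Lemma sppm_expect_sqnorm_le k x :
  (sppm_expect P F gamma (fun x => (sqnorm (x - xs))%:E) k x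
   <= (rho ^+ k * sqnorm (x - xs) + b * (1 - rho ^+ k) * s)%:E)%E.
Proof.
elim: k x => [|k IH] x /=; first by rewrite expr0 mul1r subrr mulr0 mul0r addr0.
set a := rho ^+ k; set B := b * (1 - a) * s.
have a0 : 0 <= a by rewrite exprn_ge0 // rho_ge0.
have B0 : 0 <= B.
  have s0 : (0 <= s%:E)%E by rewrite -g_var; apply: integral_ge0 => xi _; rewrite lee_fin sqnorm_ge0.
  have b0 : 0 <= b by rewrite divr_ge0 ?ltW // addr_gt0 // mulr_gt0 ?exprn_gt0.
  have a1 : 0 <= 1 - a by rewrite subr_ge0 exprn_ile1 // ?rho_ge0 ?rho_le1.
  by apply: mulr_ge0; [exact: mulr_ge0 | rewrite -lee_fin].
have E_ge0 y : (0 <= sppm_expect P F gamma (fun x => (sqnorm (x - xs))%:E) k y)%E.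
  by apply: sppm_expect_ge0 => ?; rewrite lee_fin sqnorm_ge0.
apply: le_trans (le_integral_ge0 P (fun xi => E_ge0 _) (fun xi => IH (prox gamma (F xi) x))) _.
have step xi : ((a * sqnorm (prox gamma (F xi) x - xs) + B)%:E <=
    ((a * rho * sqnorm (x - xs) + B) + (- 2 * gamma * (a * rho)) * dotp (x - xs) (g xi)
     + (gamma ^+ 2 * (a * rho)) * sqnorm (g xi))%:E)%E.
  by rewrite lee_fin; have := ler_wpM2l a0 (sqnorm_prox_sub_le xi x); lra.
apply: le_trans (le_integral_ge0 P _ step) _.
  by move=> xi; rewrite lee_fin addr_ge0 // mulr_ge0 // sqnorm_ge0.
rewrite (integral_quadratic g_int g_centered g_var) lee_fin (exprSr rho k) -/a.
have -> : b * (1 - a * rho) = b * (1 - a) + b * (1 - rho) * a by ring.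
rewrite variance_bound_fixpoint /B.
by rewrite le_eqVlt; apply/orP; left; apply/eqP; ring.
Qed.

End SPPM.

Unset Implicit Arguments. Set Strict Implicit.

Theorem mainTheorem3 (R : realType) (dim : nat) (d : measure_display)
  (Xi : measurableType d) (P : probability Xi R)
  (F : Xi -> 'rV[R]_dim -> R) (mu : R) (xstar x0 : 'rV[R]_dim) :
  0 < mu ->
  (forall xi x, differentiable (F xi) x) ->
  (forall xi, strongly_convex mu (F xi)) ->
  (forall x, P.-integrable setT (fun xi => (F xi x)%:E)) ->
  (forall x, differentiable (expect_fun P F) x) ->
  (forall x (i : 'I_dim), P.-integrable setT (fun xi => (gradient (F xi) x 0 i)%:E)) ->
  (forall x, gradient (expect_fun P F) x
             = \row_i fine (\int[P]_xi (gradient (F xi) x 0 i)%:E)) ->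
  (forall x, expect_fun P F xstar <= expect_fun P F x) ->
  forall gamma : R, 0 < gamma ->
  (forall x (i : 'I_dim), measurable_fun setT (fun xi => prox gamma (F xi) x 0 i)) ->
  forall k : nat,
    (sppm_expect P F gamma (fun x => (sqnorm (x - xstar))%:E) k x0
     <= ((1 / (1 + gamma * mu)) ^+ (2 * k) * sqnorm (x0 - xstar))%:E
        + (gamma / (gamma * mu ^+ 2 + 2 * mu))%:E * sigma_star2 P F xstar)%E.
Proof.
move=> mu_gt0 F_diff F_sc _ f_diff g_int grad_f xstar_min gamma gamma_gt0 _ k.
have g_centered i : (\int[P]_xi (gradient (F xi) xstar 0 i)%:E = 0)%E.
  have : gradient (expect_fun P F) xstar 0 i = 0.
    by rewrite mxE; exact: differential_eq0_at_min.
  rewrite grad_f mxE => fine_eq0.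
  by rewrite -(fineK (integrable_fin_num measurableT (g_int xstar i))) fine_eq0.
have b_gt0 : 0 < gamma / (gamma * mu ^+ 2 + 2 * mu).
  by rewrite divr_gt0 // addr_gt0 // mulr_gt0 ?exprn_gt0.
case sigma_eq : (sigma_star2 P F xstar) => [s| |].
- apply: le_trans (sppm_expect_sqnorm_le mu_gt0 gamma_gt0 F_sc F_diff (g_int xstar) g_centered sigma_eq k x0) _.
  rewrite -EFinM -EFinD lee_fin div1r exprM (exprVn (1 + gamma * mu) 2) lerD2l -mulrA.
  apply: ler_wpM2l; first exact: ltW.
  apply: ler_piMl; last by rewrite lerBlDr lerDl exprn_ge0 // rho_ge0.
  by rewrite -lee_fin -sigma_eq; apply: integral_ge0 => xi _; rewrite lee_fin sqnorm_ge0.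
- by rewrite gt0_muley ?lte_fin // addey ?leey.
- have : (0 <= sigma_star2 P F xstar)%E.
    by apply: integral_ge0 => xi _; rewrite lee_fin sqnorm_ge0.
  by rewrite sigma_eq.
Qed.
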